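(* Let $N$ be an absolute prime with $n>3$ decimal digits that is not a repunit. Then $11088\mid n$ (note $11088=\mathrm{lcm}(16,18,22,28)$).
   Context: For a positive integer $N$ with decimal representation $d_1d_2\dots d_n$ (digits $d_k\in\{0,\dots,9\}$, $d_1\neq 0$), a permutation of the digits of $N$ is any integer $\sum_{k=1}^{n} d_{\sigma(k)}10^{n-k}$ with $\sigma$ a permutation of $\{1,\dots,n\}$. $N$ is called an absolute prime if every integer obtained by a permutation of the digits of $N$ (including $N$ itself) is prime. A repunit is an integer $A_m=(10^m-1)/9$, all of whose decimal digits are $1$. *)

From mathcomp Require Import all_boot.
Set Implicit Arguments. Unset Strict Implicit. Unset Printing Implicit Defensive.

Fixpoint rev_digits_aux (fuel n : nat) : seq nat :=
  match fuel with
  | 0 => [::]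
  | fuel'.+1 => if n == 0 then [::] else (n %% 10) :: rev_digits_aux fuel' (n %/ 10)
  end.

Definition digits (n : nat) : seq nat := rev (rev_digits_aux n n).

Definition from_digits (s : seq nat) : nat := foldl (fun a d => a * 10 + d) 0 s.

Definition absolute_prime (N : nat) : Prop :=
  0 < N /\ forall s : seq nat, perm_eq s (digits N) -> prime (from_digits s).

Definition repunit (m : nat) : nat := (10 ^ m - 1) %/ 9.

Definition is_repunit (N : nat) : Prop := exists m, N = repunit m.

From mathcomp Require Import all_boot zify.
Set Implicit Arguments. Unset Strict Implicit. Unset Printing Implicit Defensive.

(* Moving a digit 0, 2, 4, 5, 6 or 8 to the end gives a multiple of 2 or 5, so an
   absolute prime with at least two digits is written with 1, 3, 7, 9 only.  Its digit
   multiset is then ruled out when the digit sum is divisible by 3, or when it contains a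
   small sub-multiset s whose arrangements, appended to any prefix, can always make the
   number divisible by 7 or 13.  These tests only see each digit count through "zero, one, or its
   class mod 3 beyond two", so a finite search leaves only repdigits, where a repdigit
   other than a repunit is divisible by its digit, and near-repdigits a..aba..a.
   A near-repdigit of length n <= 27 has a composite arrangement, found by search.
   For p in {17, 19, 23, 29} the prime p divides the repunit of length p - 1, so modulo p
   an arrangement only depends on n mod (p - 1); a search shows that p divides some
   arrangement unless p - 1 divides n. *)

Lemma from_digits_foldl s x :
  foldl (fun a d => a * 10 + d) x s = x * 10 ^ size s + from_digits s.
Proof.
elim: s x => [|y s IHs] x /=; first by rewrite expn0 muln1 addn0.
by rewrite /from_digits /= !IHs add0n expnS; lia.
Qed.

Lemma from_digits_cat s t :
  from_digits (s ++ t) = from_digits s * 10 ^ size t + from_digits t.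
Proof. by rewrite /from_digits foldl_cat from_digits_foldl. Qed.

Lemma from_digits_cons x s : from_digits (x :: s) = x * 10 ^ size s + from_digits s.
Proof. by rewrite -cat1s from_digits_cat. Qed.

Lemma from_digits_rcons s x : from_digits (rcons s x) = from_digits s * 10 + x.
Proof. by rewrite -cats1 from_digits_cat expn1. Qed.

Lemma from_digits_nseq n a : from_digits (nseq n a) = a * from_digits (nseq n 1).
Proof.
by elim: n => [|n IHn]; rewrite ?muln0 //= !from_digits_cons IHn !size_nseq mul1n mulnDr.
Qed.

Lemma from_digits_repunit n : from_digits (nseq n 1) = repunit n.
Proof.
rewrite /repunit; suff <- : 9 * from_digits (nseq n 1) = 10 ^ n - 1 by rewrite mulKn.
elim: n => [|n IHn] //=; rewrite from_digits_cons size_nseq mulnDr IHn expnS.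
by have := expn_gt0 10 n; lia.
Qed.

Lemma from_digits_ge s : 0 < size s -> {in s, forall x, 0 < x} ->
  10 ^ (size s).-1 <= from_digits s.
Proof.
case: s => [|x s] //= _ s_pos; rewrite from_digits_cons.
have x_pos : 0 < x by apply: s_pos; rewrite mem_head.
by apply: leq_trans (leq_addr _ _); rewrite leq_pmull.
Qed.

Lemma from_digits_mod3 s : from_digits s = sumn s %[mod 3].
Proof.
elim/last_ind: s => [|s x IHs] //.
by rewrite from_digits_rcons -cats1 sumn_cat /= addn0 -[RHS]modnDml -IHs modnDml; lia.
Qed.

Definition mod_digits (p r : nat) (s : seq nat) : nat :=
  foldl (fun a d => (a * 10 + d) %% p) r s.

Lemma mod_digits_cat p s t :
  mod_digits p (from_digits s %% p) t = from_digits (s ++ t) %% p.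
Proof.
rewrite /from_digits foldl_cat; elim: t (foldl _ 0 s) => [|d t IHt] x //=.
by rewrite -modnDml modnMml modnDml IHt.
Qed.

Lemma mod_digitsE p s : mod_digits p 0 s = from_digits s %% p.
Proof. by have := mod_digits_cat p [::] s; rewrite mod0n. Qed.

Lemma from_digits_nseq_cat_mod p q n a s : from_digits (nseq q 1) %% p = 0 ->
  from_digits (nseq n a ++ s) = from_digits (nseq (n %% q) a ++ s) %[mod p].
Proof.
move=> p_dvd_Rq; rewrite {1}(divn_eq n q); elim: (n %/ q) => [|j IHj] //.
rewrite mulSn -addnA nseqD -catA from_digits_cat from_digits_nseq -modnDm.
by rewrite mulnAC -modnMmr p_dvd_Rq muln0 mod0n add0n modn_mod.
Qed.

Lemma from_digits_rev_digits_aux fuel n :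
  n <= fuel -> from_digits (rev (rev_digits_aux fuel n)) = n.
Proof.
elim: fuel n => [|f IHf] [|n] //= n_le.
by rewrite rev_cons from_digits_rcons IHf -?divn_eq //; lia.
Qed.

Lemma from_digitsK N : from_digits (digits N) = N.
Proof. exact: from_digits_rev_digits_aux. Qed.

Lemma digits_lt10 N x : x \in digits N -> x < 10.
Proof.
rewrite /digits mem_rev; elim: N {-1}N => [|f IHf] n //=.
case: eqP => // _; rewrite inE => /orP [/eqP -> | /IHf //].
by rewrite ltn_mod.
Qed.

Lemma perm_eq_in_count (T : eqType) (D s t : seq T) :
  {subset s <= D} -> {subset t <= D} ->
  {in D, forall x, count_mem x s = count_mem x t} -> perm_eq s t.
Proof.
by move=> sD tD st; apply/allP => x; rewrite mem_cat => /orP[/sD | /tD] /st /= ->.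
Qed.

Lemma perm_cat_complement (T : eqType) (s t : seq T) :
  (forall x, count_mem x s <= count_mem x t) -> exists u, perm_eq t (u ++ s).
Proof.
case/count_subseqP => s' /perm_to_subseq [u t_perm] s_perm.
by exists u; rewrite (permPl t_perm) perm_catC perm_cat2l perm_sym.
Qed.

Definition coprime_digits := [:: 1; 3; 7; 9].

Definition multiplicity (c : seq nat) (d : nat) : nat := nth 0 c (index d coprime_digits).

Definition from_counts (c : seq nat) : seq nat :=
  flatten [seq nseq (multiplicity c d) d | d <- coprime_digits].

Definition digit_counts (L : seq nat) : seq nat := [seq count_mem d L | d <- coprime_digits].

Lemma from_counts_sub c : {subset from_counts c <= coprime_digits}.
Proof. by move=> x /flattenP [_ /mapP [d dD ->] /nseqP [-> _]]. Qed.

Lemma count_from_counts c :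
  {in coprime_digits, forall d, count_mem d (from_counts c) = multiplicity c d}.
Proof.
by move=> d; rewrite !inE => /or4P [] /eqP -> /=; rewrite !count_cat !count_nseq /=; lia.
Qed.

Lemma multiplicity_digit_counts L :
  {in coprime_digits, forall d, multiplicity (digit_counts L) d = count_mem d L}.
Proof. by move=> d dD; rewrite /multiplicity (nth_map 0) ?index_mem // nth_index. Qed.

Lemma perm_from_counts c L : {subset L <= coprime_digits} ->
  {in coprime_digits, forall d, multiplicity c d = count_mem d L} ->
  perm_eq (from_counts c) L.
Proof.
move=> LD cL; apply: (perm_eq_in_count (@from_counts_sub c) LD) => d dD.
by rewrite count_from_counts ?cL.
Qed.

Lemma sumn_from_counts c : sumn (from_counts c) =
  multiplicity c 1 + 3 * multiplicity c 3 + 7 * multiplicity c 7 + 9 * multiplicity c 9.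
Proof. by rewrite /from_counts /= !sumn_cat !sumn_nseq /=; lia. Qed.

Fixpoint vectors (k n : nat) : seq (seq nat) :=
  if k is k'.+1 then [seq x :: v | x <- iota 0 n, v <- vectors k' n] else [:: [::]].

Lemma mem_vectors n v : all (fun x => x < n) v -> v \in vectors (size v) n.
Proof.
elim: v => [|x v IHv] //= /andP [x_lt /IHv v_in].
by apply: allpairs_f; rewrite // mem_iota.
Qed.

(* Every test on digit counts below depends on a count only through this value. *)
Definition reduce_count (x : nat) : nat := if x < 3 then x else 3 + x %% 3.

Lemma reduce_count_le x : reduce_count x <= x.
Proof. rewrite /reduce_count; case: (ltnP x 3); lia. Qed.

Lemma reduce_count_lt6 x : reduce_count x < 6.
Proof. rewrite /reduce_count; case: (ltnP x 3); lia. Qed.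

Lemma reduce_count_mod3 x : reduce_count x = x %[mod 3].
Proof. rewrite /reduce_count; case: (ltnP x 3); lia. Qed.

Lemma reduce_count_id x : reduce_count x < 3 -> reduce_count x = x.
Proof. rewrite /reduce_count; case: (ltnP x 3); lia. Qed.

Lemma eq_reduce_count x y : y < 3 -> (reduce_count x == y) = (x == y).
Proof. rewrite /reduce_count; case: (ltnP x 3) => ? ?; apply/eqP/eqP; lia. Qed.

Definition reduced_counts (L : seq nat) : seq nat := map reduce_count (digit_counts L).

Lemma multiplicity_reduced_counts L : {in coprime_digits, forall d,
  multiplicity (reduced_counts L) d = reduce_count (count_mem d L)}.
Proof.
move=> d dD; rewrite /multiplicity (nth_map 0) ?size_map ?index_mem //.
by congr reduce_count; apply: multiplicity_digit_counts.
Qed.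

Lemma reduced_counts_in_vectors L : reduced_counts L \in vectors 4 6.
Proof. by apply: mem_vectors; apply/allP => _ /mapP [x _ ->]; exact: reduce_count_lt6. Qed.

Definition perm_prime (L : seq nat) : Prop :=
  forall s, perm_eq s L -> prime (from_digits s).

Lemma prime_proper_dvdF n p : prime n -> 1 < p -> p < n -> p %| n -> False.
Proof.
move=> n_prime p_gt1 p_lt_n /(prime_nt_dvdP n_prime) p_eq_n.
by move: p_lt_n; rewrite p_eq_n ?ltnn // neq_ltn p_gt1 orbT.
Qed.

Lemma perm_rcons_rem (T : eqType) (x : T) s : x \in s -> perm_eq (rcons (rem x s) x) s.
Proof. by move=> xs; rewrite perm_rcons perm_sym perm_to_rem. Qed.

Lemma perm_prime_notin0 L : perm_prime L -> 0 \notin L.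
Proof.
move=> L_prime; apply/negP => L0.
have := L_prime _ (perm_rcons_rem L0); rewrite from_digits_rcons addn0.
case: (posnP (from_digits (rem 0 L))) => [-> // | F_pos F10_prime].
by apply: (prime_proper_dvdF F10_prime (p := 2)); rewrite ?dvdn_mull //; lia.
Qed.

Lemma perm_prime_coprime_digits L : perm_prime L -> 1 < size L ->
  {in L, forall x, x < 10} -> {subset L <= coprime_digits}.
Proof.
move=> L_prime L_size L_lt10 x xL; apply/negPn/negP => x_nD.
have L_pos y : y \in L -> 0 < y.
  by rewrite lt0n; apply: contraTneq => ->; exact: perm_prime_notin0.
have [p p_gt1 /andP [p_10 p_x]] : exists2 p, 1 < p & (p %| 10) && (p %| x).
  move: x_nD (L_pos x xL) (L_lt10 x xL).
  by case: x {xL} => [|[|[|[|[|[|[|[|[|[|x]]]]]]]]]] // _ _ _;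
    [exists 2 | exists 2 | exists 5 | exists 2 | exists 2].
have F_pos : 0 < from_digits (rem x L).
  apply: leq_trans (from_digits_ge _ _); rewrite ?expn_gt0 ?size_rem //.
    by rewrite -subn1 subn_gt0.
  by move=> y /mem_rem /L_pos.
apply: (prime_proper_dvdF (L_prime _ (perm_rcons_rem xL)) p_gt1);
  rewrite from_digits_rcons; last by rewrite dvdn_add // dvdn_mull.
by have := dvdn_leq (isT : 0 < 10) p_10; have := L_pos x xL; lia.
Qed.

(* Whatever residue [r] a prefix leaves modulo [p], some arrangement of [s] appended to
   it yields a multiple of [p]. *)
Definition covers (p : nat) (s rs : seq nat) : bool :=
  all (fun r => has (fun P => mod_digits p r P == 0) (permutations s)) rs.

Definition covering (s : seq nat) : bool := has (fun p => covers p s (iota 0 p)) [:: 7; 13].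

(* [if] rather than [&&]: [vm_compute] is call-by-value and would enumerate the
   permutations of every long candidate. *)
Definition covering_multisets : seq (seq nat) :=
  [seq s <- map from_counts (vectors 4 4) | if size s <= 5 then covering s else false].

Definition near_constant (c : seq nat) : bool :=
  has (fun a => has (fun b => all (fun d => (d != a) ==> (multiplicity c d == (d == b)))
    coprime_digits) coprime_digits) coprime_digits.

Definition exact_counts (c : seq nat) : bool :=
  all (fun d => multiplicity c d < 3) coprime_digits.

Definition counts_resolved (cover : seq (seq nat)) (c : seq nat) : bool :=
  [|| near_constant c, 3 %| sumn (from_counts c),
      has (fun s => all (fun d => count_mem d s <= multiplicity c d) coprime_digits) cover |
      if exact_counts c then
        (size (from_counts c) < 4) ||
        has (fun p => covers p (from_counts c) [:: 0]) [:: 7; 11; 13; 17]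
      else false].

Lemma counts_resolved_all : all (counts_resolved covering_multisets) (vectors 4 6).
Proof. by vm_compute. Qed.

Lemma sumn_reduced_counts L : {subset L <= coprime_digits} ->
  sumn (from_counts (reduced_counts L)) = sumn L %[mod 3].
Proof.
move=> LD; rewrite -(perm_sumn (perm_from_counts LD (multiplicity_digit_counts L))).
rewrite !sumn_from_counts !multiplicity_reduced_counts ?inE ?eqxx ?orbT //.
rewrite !multiplicity_digit_counts ?inE ?eqxx ?orbT //.
have := reduce_count_mod3 (count_mem 1 L); have := reduce_count_mod3 (count_mem 3 L).
have := reduce_count_mod3 (count_mem 7 L); have := reduce_count_mod3 (count_mem 9 L).
lia.
Qed.

Definition near_repdigit (m k a b : nat) : seq nat := nseq (m - k) a ++ b :: nseq k a.

Lemma near_repdigit_mod p q m m' k a b : from_digits (nseq q 1) %% p = 0 ->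
  (m - k) %% q = (m' - k) %% q ->
  from_digits (near_repdigit m k a b) = from_digits (near_repdigit m' k a b) %[mod p].
Proof.
move=> Rq eq_mod; rewrite /near_repdigit (from_digits_nseq_cat_mod _ _ _ Rq).
by rewrite [RHS](from_digits_nseq_cat_mod _ _ _ Rq) eq_mod.
Qed.

Definition has_factor_in (ps : seq nat) (m k a b : nat) : bool :=
  has (fun p => mod_digits p 0 (near_repdigit m k a b) == 0) ps.

Definition small_moduli : seq nat := [:: 3; 7; 11; 13; 17; 19; 23; 29; 31; 43; 47; 131].

Definition short_near_repdigits_composite : bool :=
  all (fun m => all (fun a => all (fun b => (a != b) ==>
    has (fun k => has_factor_in small_moduli m k a b) (iota 0 m.+1))
  coprime_digits) coprime_digits) (iota 3 24).

Lemma short_near_repdigits_composite_ok : short_near_repdigits_composite.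
Proof. by vm_compute. Qed.

(* When [p] divides the repunit of length [q], a near-repdigit of length [m + 1] is
   congruent mod [p] to the one of length [q + r] with [r = (m + 1) %% q]. *)
Definition periodic_factor (p q : nat) : bool :=
  (mod_digits p 0 (nseq q 1) == 0) &&
  all (fun r => (r != 0) ==> all (fun a => all (fun b => (a != b) ==>
    has (fun k => has_factor_in [:: p] (q + r).-1 k a b) (iota 0 q))
  coprime_digits) coprime_digits) (iota 0 q).

Lemma periodic_factor_ok : [&& periodic_factor 17 16, periodic_factor 19 18,
  periodic_factor 23 22 & periodic_factor 29 28].
Proof. by vm_compute. Qed.

Section PermPrime.

Variable L : seq nat.
Hypotheses (L_prime : perm_prime L) (L_digits : {subset L <= coprime_digits}).
Hypothesis L_size : 3 < size L.

Lemma perm_ndvdF s p : perm_eq s L -> 1 < p < 1000 -> p %| from_digits s -> False.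
Proof.
move=> sL /andP [p_gt1 p_lt] p_dvd.
apply: (prime_proper_dvdF (L_prime sL) p_gt1 _ p_dvd); apply: (leq_trans p_lt).
have s_pos : {in s, forall x, 0 < x}.
  by move=> x; rewrite (perm_mem sL) => /L_digits; rewrite !inE => /or4P [] /eqP ->.
have s_size : 0 < size s by rewrite (perm_size sL) (leq_trans _ L_size).
apply: leq_trans (from_digits_ge s_size s_pos).
by rewrite (_ : 1000 = 10 ^ 3) // leq_exp2l // -ltnS prednK // (perm_size sL).
Qed.

Lemma sumn_dvd3F : 3 %| sumn L -> False.
Proof.
by move=> sum3; apply: (perm_ndvdF (perm_refl L) (p := 3)); rewrite // /dvdn from_digits_mod3.
Qed.

Lemma coversF u s p rs : perm_eq L (u ++ s) -> from_digits u %% p \in rs ->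
  1 < p < 1000 -> covers p s rs -> False.
Proof.
move=> Lus u_rs p_range /allP /(_ _ u_rs) /hasP [P]; rewrite mem_permutations => Ps.
rewrite mod_digits_cat => /eqP uP_mod.
have uPL : perm_eq (u ++ P) L by rewrite perm_sym (permPl Lus) perm_cat2l perm_sym.
by apply: (perm_ndvdF uPL p_range); rewrite /dvdn uP_mod.
Qed.

Lemma reduced_counts_coveredF :
  has (fun s => all (fun d => count_mem d s <= multiplicity (reduced_counts L) d)
    coprime_digits) covering_multisets -> False.
Proof.
case/hasP => s; rewrite mem_filter => /andP [s_cov /mapP [e _ s_e]] /allP s_sub.
have [p p_mod s_covers] : exists2 p, p \in [:: 7; 13] & covers p s (iota 0 p).
  by move: s_cov; case: ifP => // _ /hasP.
have [u Lus] : exists u, perm_eq L (u ++ s).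
  apply: perm_cat_complement => x; have [xD | xnD] := boolP (x \in coprime_digits).
    apply: leq_trans (s_sub x xD) _.
    by rewrite multiplicity_reduced_counts // reduce_count_le.
  suff /count_memPn -> : x \notin s by [].
  by apply: contra xnD; rewrite s_e => /from_counts_sub.
have /andP [p_gt1 p_lt] : 1 < p < 1000 by move: p_mod; rewrite !inE => /orP [] /eqP ->.
apply: (coversF Lus _ _ s_covers); last by rewrite p_gt1.
by rewrite mem_iota ltn_pmod // ltnW.
Qed.

Lemma exact_reduced_countsF : exact_counts (reduced_counts L) ->
  (size (from_counts (reduced_counts L)) < 4) ||
  has (fun p => covers p (from_counts (reduced_counts L)) [:: 0]) [:: 7; 11; 13; 17] -> False.
Proof.
move=> /allP c_exact; set c := reduced_counts L.
have cL : perm_eq (from_counts c) L.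
  apply: perm_from_counts => // d dD.
  by rewrite -[RHS]reduce_count_id -?multiplicity_reduced_counts // c_exact.
case/orP => [| /hasP [p p_mod c_covers]]; first by rewrite (perm_size cL) ltnNge L_size.
apply: (coversF (u := [::]) _ _ _ c_covers); first by rewrite perm_sym.
  by rewrite /from_digits /= mod0n mem_head.
by move: p_mod; rewrite !inE => /or4P [] /eqP ->.
Qed.

Lemma perm_prime_shape : exists a b, [/\ a \in coprime_digits, b \in coprime_digits &
  {in coprime_digits, forall d, d != a -> count_mem d L = (d == b)}].
Proof.
case/or4P: (allP counts_resolved_all _ (reduced_counts_in_vectors L)).
- case/hasP => a aD /hasP [b bD /allP c_shape]; exists a, b; split=> // d dD d_neq_a.
  apply/eqP; rewrite -eq_reduce_count; last by case: (d == b).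
  by rewrite -multiplicity_reduced_counts // (implyP (c_shape d dD)).
- by rewrite /dvdn sumn_reduced_counts // => /sumn_dvd3F.
- by move/reduced_counts_coveredF.
- by case: ifP => // /exact_reduced_countsF.
Qed.

Lemma repdigit_repunit a : a \in coprime_digits ->
  {in coprime_digits, forall d, d != a -> count_mem d L = (d == a)} ->
  from_digits L = repunit (size L).
Proof.
move=> aD L_shape.
have L_nseq : L = nseq (size L) a.
  apply/all_pred1P/allP => x xL /=; apply/contraT => x_neq_a.
  have := L_shape x (L_digits xL) x_neq_a; rewrite (negbTE x_neq_a).
  by move/count_memPn; rewrite xL.
have [a1 | a_neq1] := eqVneq a 1.
  by rewrite {1}L_nseq from_digits_nseq a1 mul1n from_digits_repunit.
exfalso; apply: (perm_ndvdF (perm_refl L) (p := a)).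
  by move: aD a_neq1; rewrite !inE => /or4P [] /eqP ->.
by rewrite {1}L_nseq from_digits_nseq dvdn_mulr.
Qed.

Section NearRepdigit.

Variables a b : nat.
Hypotheses (aD : a \in coprime_digits) (bD : b \in coprime_digits) (a_neq_b : a != b).
Hypothesis L_shape : {in coprime_digits, forall d, d != a -> count_mem d L = (d == b)}.

Local Notation m := (count_mem a L).

Lemma perm_near_repdigit k : k <= m -> perm_eq (near_repdigit m k a b) L.
Proof.
move=> k_le; apply: (perm_eq_in_count (D := coprime_digits)) => //.
  by move=> x; rewrite mem_cat inE => /or3P [/nseqP [-> _] | /eqP -> | /nseqP [-> _]].
move=> d dD; rewrite !count_cat /= !count_nseq.
have [-> | d_neq_a] := eqVneq d a.
  by rewrite /= eqxx eq_sym (negbTE a_neq_b) !mul1n add0n subnK.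
rewrite /= (L_shape dD d_neq_a) (eq_sym a d) (negbTE d_neq_a) (eq_sym b d).
by rewrite !mul0n add0n addn0.
Qed.

Lemma size_L : size L = m.+1.
Proof.
rewrite -(perm_size (perm_near_repdigit (leq0n m))).
by rewrite size_cat /= !size_nseq subn0 addnS addn0.
Qed.

Lemma has_factor_inF ps k : k <= m -> all (fun p => 1 < p < 1000) ps ->
  has_factor_in ps m k a b -> False.
Proof.
move=> k_le /allP ps_range /hasP [p /ps_range p_range]; rewrite mod_digitsE => /eqP p_dvd.
by apply: (perm_ndvdF (perm_near_repdigit k_le) p_range); rewrite /dvdn p_dvd.
Qed.

Lemma near_repdigit_long : 27 <= m.
Proof.
rewrite leqNgt; apply/negP => m_lt27.
have m_ge3 : 3 <= m by rewrite -ltnS -size_L.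
have m_in : m \in iota 3 24 by rewrite mem_iota m_ge3.
move: (allP short_near_repdigits_composite_ok m m_in).
move=> /allP /(_ a aD) /allP /(_ b bD) /implyP /(_ a_neq_b) /hasP [k].
by rewrite mem_iota => /andP [_ k_le]; exact: (@has_factor_inF small_moduli k k_le isT).
Qed.

Lemma period_dvd p q : periodic_factor p q -> 0 < q <= 28 -> 1 < p < 1000 -> q %| m.+1.
Proof.
move=> /andP [/eqP Rq /allP factors] /andP [q_gt0 q_le] p_range; rewrite mod_digitsE in Rq.
apply/negPn/negP; rewrite /dvdn => r_neq0.
have /factors : m.+1 %% q \in iota 0 q by rewrite mem_iota ltn_pmod.
move=> /implyP /(_ r_neq0) /allP /(_ a aD) /allP /(_ b bD) /implyP /(_ a_neq_b) /hasP [k].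
rewrite mem_iota add0n => k_lt_q has_factor.
have m_ge := near_repdigit_long.
have e : (m - k) %% q = ((q + m.+1 %% q).-1 - k) %% q.
  apply/eqP; rewrite -(eqn_modDr k.+1); set r := m.+1 %% q.
  rewrite (_ : m - k + k.+1 = m.+1); last lia.
  rewrite (_ : (q + r).-1 - k + k.+1 = q + r); last lia.
  by rewrite modnDl modn_mod.
apply: (@has_factor_inF [:: p] k); [lia | by rewrite /= p_range | ].
move: has_factor; rewrite /has_factor_in /= !orbF !mod_digitsE.
by rewrite (near_repdigit_mod _ _ Rq e); exact: id.
Qed.

Lemma near_repdigit_length : 11088 %| size L.
Proof.
case/and4P: periodic_factor_ok => /period_dvd/(_ isT isT) d16 /period_dvd/(_ isT isT) d18
  /period_dvd/(_ isT isT) d22 /period_dvd/(_ isT isT) d28.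
rewrite size_L (_ : 11088 = lcmn (lcmn (lcmn 16 18) 22) 28); last by vm_compute.
by rewrite !dvdn_lcm d16 d18 d22 d28.
Qed.

End NearRepdigit.

End PermPrime.

Theorem theorem2 (N : nat) :
  absolute_prime N -> 3 < size (digits N) -> ~ is_repunit N ->
  11088 %| size (digits N).
Proof.
move=> [_ N_prime] N_size N_repunit.
have N_digits : {subset digits N <= coprime_digits}.
  by apply: perm_prime_coprime_digits (ltnW (ltnW N_size)) (@digits_lt10 N).
have [a [b [aD bD shape]]] := perm_prime_shape N_prime N_digits N_size.
have [a_eq_b | a_neq_b] := eqVneq a b; last exact: near_repdigit_length shape.
rewrite -a_eq_b in shape.
case: N_repunit; exists (size (digits N)); rewrite -[in LHS](from_digitsK N).
exact: repdigit_repunit aD shape.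
Qed.
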